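(* Consider $CP(N)$ with rates $\psi(i,j)=2ij$ started from $(N,0,\dots,0)$, and let $n_{k,N}(t)$ be the number of clusters of size $k$ at time $t$. Then for every fixed $t>0$ and fixed $k,l$ with $k\neq l$, as $N\to\infty$: $\mathbb E\,n_{k,N}(t)\to0$, $\operatorname{Var} n_{k,N}(t)\to0$ and $\operatorname{cov}(n_{k,N}(t),n_{l,N}(t))\to0$; while $\mathbb E\,n_{N,N}(t)\to1$, so the probability $p_{coag,N}(t)$ of a single cluster of size $N$ at time $t$ tends to $1$ as $N\to\infty$.
   Context: $CP(N)$ is the continuous-time Markov chain on partitions $\eta=(n_1,\dots,n_N)$ of $N$ ($n_k$ = number of clusters of size $k$, $\sum kn_k=N$) in which any two distinct clusters of sizes $i,j$ merge into one of size $i+j$ at rate $\psi(i,j)$; the transition $\eta\to\eta^{(i,j)}$ has rate $n_in_j\psi(i,j)$ for $i\ne j$ and $\frac{n_i(n_i-1)}2\psi(i,i)$ for $i=j$. *)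

From Stdlib Require Import Reals List Arith.
Import ListNotations.
Open Scope R_scope.

(* A state eta of CP(N) (a partition of N) is represented as the
   non-increasing list of its cluster sizes; n_k(eta) = number of
   occurrences of k in the list. *)

Fixpoint parts_aux (fuel m n : nat) : list (list nat) :=
  match fuel with
  | O => match n with O => [[]] | _ => [] end
  | S f =>
      match n with
      | O => [[]]
      | _ => flat_map (fun k => map (cons k) (parts_aux f k (n - k)))
                      (seq 1 (Nat.min m n))
      end
  end.

Definition parts (N : nat) : list (list nat) := parts_aux N N N.

Definition ncl (k : nat) (eta : list nat) : nat := count_occ Nat.eq_dec eta k.

Fixpoint remove_one (x : nat) (l : list nat) : list nat :=
  match l with
  | [] => []
  | y :: l' => if Nat.eqb x y then l' else y :: remove_one x l'
  end.

Fixpoint insert_desc (x : nat) (l : list nat) : list nat :=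
  match l with
  | [] => [x]
  | y :: l' => if Nat.leb y x then x :: l else y :: insert_desc x l'
  end.

Definition merge (eta : list nat) (i j : nat) : list nat :=
  insert_desc (i + j) (remove_one j (remove_one i eta)).

(* Rate of eta -> eta^{(i,j)} (for i <= j), with kernel psi. *)
Definition rate (psi : nat -> nat -> R) (eta : list nat) (i j : nat) : R :=
  if Nat.eq_dec i j
  then INR (ncl i eta) * (INR (ncl i eta) - 1) / 2 * psi i i
  else INR (ncl i eta) * INR (ncl j eta) * psi i j.

Definition sumR {A : Type} (l : list A) (f : A -> R) : R :=
  fold_right (fun x acc => f x + acc) 0 l.

Definition sum_pairs (N : nat) (f : nat -> nat -> R) : R :=
  sumR (seq 1 N) (fun i => sumR (seq i (S N - i)) (fun j => f i j)).

Definition list_eqb (a b : list nat) : bool :=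
  if list_eq_dec Nat.eq_dec a b then true else false.

Definition forward_rhs (psi : nat -> nat -> R) (N : nat)
    (p : list nat -> R) (eta' : list nat) : R :=
  sumR (parts N) (fun eta =>
    sum_pairs N (fun i j =>
      if list_eqb (merge eta i j) eta' then p eta * rate psi eta i j else 0))
  - p eta' * sum_pairs N (fun i j => rate psi eta' i j).

(* p : R -> list nat -> R is the law at time t of CP(N) with kernel psi
   started at eta0: it solves the Kolmogorov forward equations on the
   (finite) state space parts N, with initial law delta_{eta0}.
   (This linear ODE has a unique solution, exp(tQ).) *)
Definition is_CP_law (psi : nat -> nat -> R) (N : nat) (eta0 : list nat)
    (p : R -> list nat -> R) : Prop :=
  (forall eta, In eta (parts N) -> p 0 eta = if list_eqb eta eta0 then 1 else 0) /\
  (forall eta t, In eta (parts N) ->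
     derivable_pt_lim (fun s => p s eta) t (forward_rhs psi N (p t) eta)).

(* Initial state (N,0,...,0): N clusters of size 1. *)
Definition monomers (N : nat) : list nat := repeat 1%nat N.

Definition Ex (N : nat) (p : R -> list nat -> R) (t : R) (f : list nat -> R) : R :=
  sumR (parts N) (fun eta => p t eta * f eta).

Definition Var (N : nat) (p : R -> list nat -> R) (t : R) (f : list nat -> R) : R :=
  Ex N p t (fun eta => f eta * f eta) - Ex N p t f * Ex N p t f.

Definition Cov (N : nat) (p : R -> list nat -> R) (t : R) (f g : list nat -> R) : R :=
  Ex N p t (fun eta => f eta * g eta) - Ex N p t f * Ex N p t g.

Definition nk (k : nat) : list nat -> R := fun eta => INR (ncl k eta).

Definition psi_mult (i j : nat) : R := 2 * INR i * INR j.

From Stdlib Require Import Reals List Arith Lia Lra.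
Import ListNotations.

(* Under psi(i,j) = 2ij the total jump rate out of a partition with m clusters is
   (sum of sizes)^2 - (sum of squared sizes) >= N (m - 1), and every jump lowers m by one.
   Hence d/dt E(m - 1) = - E(total rate) <= - N E(m - 1), so E(m - 1) <= (N - 1) e^{-Nt}.
   For k <> N one has n_k <= 2 (m - 1) and n_k n_l <= 2 N (m - 1), while n_N is the
   indicator of the one-cluster state and is at least 1 - (m - 1); so every moment in the
   statement is within O(N^2 e^{-Nt}) of its limit. *)

Fixpoint desc_le (m : nat) (l : list nat) : Prop :=
  match l with
  | [] => True
  | x :: l' => (1 <= x <= m)%nat /\ desc_le x l'
  end.

Lemma desc_le_weaken m m' l : (m <= m')%nat -> desc_le m l -> desc_le m' l.
Proof. destruct l; simpl; intuition lia. Qed.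

Lemma desc_le_In m l x : desc_le m l -> In x l -> (1 <= x <= m)%nat.
Proof.
  revert m; induction l as [|y l IH]; [contradiction|].
  intros m [Hy Hl] [<-|Hx]; [auto|]. specialize (IH _ Hl Hx); lia.
Qed.

Lemma desc_le_length m l : desc_le m l -> (length l <= list_sum l)%nat.
Proof.
  revert m; induction l as [|x l IH]; simpl; intros m Hm; [lia|].
  destruct Hm as [Hx Hl]; specialize (IH _ Hl); lia.
Qed.

Lemma desc_le_sum0 m l : desc_le m l -> list_sum l = 0%nat -> l = [].
Proof. destruct l; simpl; intuition lia. Qed.

Lemma In_parts_aux fuel : forall m n l, (n <= fuel)%nat ->
  In l (parts_aux fuel m n) <-> desc_le m l /\ list_sum l = n.
Proof.
  induction fuel as [|fuel IH]; intros m n l Hn; (destruct n as [|n]; [|try lia]).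
  1, 2: split; [intros [<-|[]]; simpl; auto|];
        intros [Hl Hs]; left; symmetry; exact (desc_le_sum0 _ _ Hl Hs).
  cbn [parts_aux]. rewrite in_flat_map. split.
  - intros [k [Hk Hl]]. apply in_seq in Hk. apply in_map_iff in Hl.
    destruct Hl as [l' [<- Hl']]. apply IH in Hl'; [|lia].
    simpl; intuition lia.
  - intros [Hl Hs]. destruct l as [|k l]; simpl in Hl, Hs; [lia|].
    destruct Hl as [Hk Hl]. exists k; split; [apply in_seq; lia|].
    apply in_map_iff; exists l; split; auto. apply IH; [lia|split; [auto|lia]].
Qed.

Lemma In_parts N l : In l (parts N) <-> desc_le N l /\ list_sum l = N.
Proof. apply In_parts_aux; lia. Qed.

Lemma NoDup_flat_map {A B} (f : A -> list B) (l : list A) :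
  NoDup l -> (forall x, In x l -> NoDup (f x)) ->
  (forall x y z, In x l -> In y l -> x <> y -> In z (f x) -> ~ In z (f y)) ->
  NoDup (flat_map f l).
Proof.
  induction l as [|a l IH]; simpl; intros Hl Hf Hd; [constructor|].
  inversion Hl; subst. apply NoDup_app; auto.
  - apply IH; auto. intros x y z Hx Hy. apply Hd; auto.
  - intros z Hz [y [Hy Hzy]]%in_flat_map.
    apply (Hd a y z); auto. intros ->; contradiction.
Qed.

Lemma NoDup_parts_aux fuel m n : NoDup (parts_aux fuel m n).
Proof.
  revert m n; induction fuel as [|fuel IH]; intros m n.
  - destruct n; repeat constructor; auto.
  - destruct n as [|n]; [repeat constructor; auto|].
    cbn [parts_aux]. apply NoDup_flat_map.
    + apply seq_NoDup.
    + intros k _. apply NoDup_map_NoDup_ForallPairs; auto.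
      intros x y _ _ Hxy. injection Hxy; auto.
    + intros x y z _ _ Hxy [a [<- _]]%in_map_iff [b [Hb _]]%in_map_iff.
      injection Hb; auto.
Qed.

Lemma NoDup_parts N : NoDup (parts N).
Proof. apply NoDup_parts_aux. Qed.

Lemma remove_one_length x l : In x l -> length (remove_one x l) = pred (length l).
Proof.
  induction l as [|y l IH]; simpl; intros Hx; [contradiction|].
  destruct (Nat.eqb_spec x y) as [|Hxy]; auto.
  destruct Hx as [->|Hx]; [congruence|].
  simpl; rewrite IH by auto. destruct l; [contradiction | auto].
Qed.

Lemma remove_one_sum x l : In x l -> (list_sum (remove_one x l) + x)%nat = list_sum l.
Proof.
  induction l as [|y l IH]; simpl; intros Hx; [contradiction|].
  destruct (Nat.eqb_spec x y) as [->|Hxy]; [lia|].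
  destruct Hx as [->|Hx]; [congruence|]. simpl; rewrite <- IH by auto; lia.
Qed.

Lemma remove_one_incl z x l : In z (remove_one x l) -> In z l.
Proof.
  induction l as [|y l IH]; simpl; auto.
  destruct (Nat.eqb x y); simpl; intuition.
Qed.

Lemma desc_le_remove_one m x l : desc_le m l -> desc_le m (remove_one x l).
Proof.
  revert m; induction l as [|y l IH]; intros m; simpl; auto.
  intros [Hy Hl]. destruct (Nat.eqb x y); [apply (desc_le_weaken y); [lia|auto]|].
  simpl; auto.
Qed.

Lemma count_occ_remove_one i j l : In i l ->
  count_occ Nat.eq_dec (remove_one i l) j =
  if Nat.eq_dec i j then pred (count_occ Nat.eq_dec l j) else count_occ Nat.eq_dec l j.
Proof.
  induction l as [|y l IH]; simpl; intros Hi; [contradiction|].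
  destruct (Nat.eqb_spec i y) as [->|Hiy].
  - destruct (Nat.eq_dec y j); auto.
  - destruct Hi as [->|Hi]; [congruence|]. simpl; rewrite IH by auto.
    destruct (Nat.eq_dec y j), (Nat.eq_dec i j); subst; try congruence; auto.
Qed.

Lemma desc_le_insert_desc m x l : (1 <= x <= m)%nat -> desc_le m l -> desc_le m (insert_desc x l).
Proof.
  revert m; induction l as [|y l IH]; intros m Hx; simpl; auto.
  intros [Hy Hl]. destruct (Nat.leb_spec y x); simpl.
  - intuition lia.
  - split; auto. apply IH; auto; lia.
Qed.

Lemma insert_desc_sum x l : list_sum (insert_desc x l) = (x + list_sum l)%nat.
Proof.
  induction l as [|y l IH]; simpl; [lia|].
  destruct (Nat.leb y x); simpl; lia.
Qed.

Lemma insert_desc_length x l : length (insert_desc x l) = S (length l).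
Proof.
  induction l as [|y l IH]; simpl; auto. destruct (Nat.leb y x); simpl; auto.
Qed.

Lemma merge_length eta i j : In i eta -> In j (remove_one i eta) ->
  S (length (merge eta i j)) = length eta.
Proof.
  intros Hi Hj. unfold merge.
  rewrite insert_desc_length, (remove_one_length j) by auto.
  pose proof (remove_one_length i eta Hi).
  destruct (remove_one i eta); [contradiction|]. simpl in *; lia.
Qed.

Lemma merge_In_parts N eta i j : In eta (parts N) -> In i eta -> In j (remove_one i eta) ->
  In (merge eta i j) (parts N).
Proof.
  rewrite !In_parts. intros [Hd Hs] Hi Hj. unfold merge.
  pose proof (remove_one_sum i eta Hi).
  pose proof (remove_one_sum j _ Hj).
  pose proof (desc_le_In _ _ _ Hd (remove_one_incl _ _ _ Hj)).
  split.
  - apply desc_le_insert_desc; [lia|]. now apply desc_le_remove_one, desc_le_remove_one.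
  - rewrite insert_desc_sum; lia.
Qed.

Lemma parts_length N e : In e (parts N) -> (length e <= N)%nat /\ (1 <= N -> 1 <= length e)%nat.
Proof.
  intros [Hd <-]%In_parts. split; [exact (desc_le_length _ _ Hd)|].
  destruct e; simpl; lia.
Qed.

Lemma parts_single_or_many N e : (1 <= N)%nat -> In e (parts N) ->
  e = [N] \/ ((2 <= length e)%nat /\ ~ In N e).
Proof.
  intros HN He. pose proof (parts_length N e He) as [_ Hlen].
  apply In_parts in He as [Hd Hs].
  destruct e as [|x [|y e]]; simpl in Hlen, Hs; [lia | left; f_equal; lia |].
  right; split; [simpl; lia|]. intros HNe.
  pose proof (remove_one_sum N _ HNe).
  pose proof (desc_le_length _ _ (desc_le_remove_one _ N _ Hd)).
  rewrite remove_one_length in * by auto. simpl in *; lia.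
Qed.

Open Scope R_scope.

Lemma sumR_ext {A} (l : list A) f g :
  (forall x, In x l -> f x = g x) -> sumR l f = sumR l g.
Proof.
  induction l as [|a l IH]; simpl; intros H; auto.
  rewrite H, IH by auto; reflexivity.
Qed.

Lemma sumR_0 {A} (l : list A) : sumR l (fun _ => 0) = 0.
Proof. induction l; simpl; lra. Qed.

Lemma sumR_plus {A} (l : list A) f g :
  sumR l (fun x => f x + g x) = sumR l f + sumR l g.
Proof. induction l; simpl; lra. Qed.

Lemma sumR_minus {A} (l : list A) f g :
  sumR l (fun x => f x - g x) = sumR l f - sumR l g.
Proof. induction l; simpl; lra. Qed.

Lemma sumR_mult_l {A} (l : list A) f c :
  c * sumR l f = sumR l (fun x => c * f x).
Proof. induction l; simpl; lra. Qed.

Lemma sumR_mult_r {A} (l : list A) f c :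
  sumR l f * c = sumR l (fun x => f x * c).
Proof. induction l; simpl; lra. Qed.

Lemma sumR_swap {A B} (l1 : list A) (l2 : list B) f :
  sumR l1 (fun a => sumR l2 (f a)) = sumR l2 (fun b => sumR l1 (fun a => f a b)).
Proof.
  induction l1 as [|a l1 IH]; simpl; [now rewrite sumR_0|].
  rewrite IH, <- sumR_plus; reflexivity.
Qed.

Lemma sumR_le {A} (l : list A) f g :
  (forall x, In x l -> f x <= g x) -> sumR l f <= sumR l g.
Proof.
  induction l as [|a l IH]; simpl; intros H; [lra|].
  pose proof (H a (or_introl eq_refl)). pose proof (IH (fun x Hx => H x (or_intror Hx))). lra.
Qed.

Lemma sumR_nonneg {A} (l : list A) f :
  (forall x, In x l -> 0 <= f x) -> 0 <= sumR l f.
Proof. intros H. rewrite <- (sumR_0 l). now apply sumR_le. Qed.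

Lemma sumR_select {A} (dec : forall x y : A, {x = y} + {x <> y}) (l : list A) a c :
  NoDup l -> In a l -> sumR l (fun x => if dec a x then c x else 0) = c a.
Proof.
  induction l as [|b l IH]; simpl; intros Hl Ha; [contradiction|].
  inversion Hl; subst. destruct (dec a b) as [->|Hab].
  - rewrite (sumR_ext l _ (fun _ => 0)), sumR_0; [lra|].
    intros x Hx. destruct (dec b x); [subst; contradiction | auto].
  - destruct Ha as [->|Ha]; [congruence|]. rewrite IH; auto; lra.
Qed.

Lemma list_eqb_sym a b : list_eqb a b = list_eqb b a.
Proof.
  unfold list_eqb.
  destruct (list_eq_dec Nat.eq_dec a b), (list_eq_dec Nat.eq_dec b a); congruence.
Qed.

Lemma sumR_select_parts N eta c : In eta (parts N) ->
  sumR (parts N) (fun e => if list_eqb e eta then c e else 0) = c eta.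
Proof.
  intros He. rewrite <- (sumR_select (list_eq_dec Nat.eq_dec) _ eta c (NoDup_parts N) He).
  apply sumR_ext; intros e _. rewrite list_eqb_sym. unfold list_eqb.
  destruct (list_eq_dec Nat.eq_dec eta e); reflexivity.
Qed.

Lemma sumR_INR l : sumR l INR = INR (list_sum l).
Proof. induction l; simpl; [auto|]. rewrite plus_INR; lra. Qed.

Lemma sum_pairs_ext N f g : (forall i j, f i j = g i j) -> sum_pairs N f = sum_pairs N g.
Proof. intros H. apply sumR_ext; intros i _. apply sumR_ext; auto. Qed.

Lemma sum_pairs_minus N f g :
  sum_pairs N (fun i j => f i j - g i j) = sum_pairs N f - sum_pairs N g.
Proof.
  unfold sum_pairs. rewrite <- sumR_minus. apply sumR_ext; intros; apply sumR_minus.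
Qed.

Lemma sum_pairs_mult_l N f c : c * sum_pairs N f = sum_pairs N (fun i j => c * f i j).
Proof.
  unfold sum_pairs. rewrite sumR_mult_l. apply sumR_ext; intros; apply sumR_mult_l.
Qed.

Lemma sum_pairs_sumR {A} N (l : list A) f :
  sum_pairs N (fun i j => sumR l (f i j)) = sumR l (fun x => sum_pairs N (fun i j => f i j x)).
Proof.
  unfold sum_pairs. rewrite <- sumR_swap. apply sumR_ext; intros i _. apply sumR_swap.
Qed.

Lemma sum_pairs_nonneg N f : (forall i j, 0 <= f i j) -> 0 <= sum_pairs N f.
Proof. intros H. apply sumR_nonneg; intros i _. apply sumR_nonneg; auto. Qed.

Lemma sum_upper_sym s n f : (forall i j, f i j = f j i) ->
  2 * sumR (seq s n) (fun i => sumR (seq i (s + n - i)) (f i)) =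
  sumR (seq s n) (fun i => sumR (seq s n) (f i)) + sumR (seq s n) (fun i => f i i).
Proof.
  intros Hf. revert s; induction n as [|n IH]; intros s; simpl; [lra|].
  replace (s + S n - s)%nat with (S n) by lia. simpl.
  rewrite (sumR_ext (seq (S s) n) (fun i => sumR (seq i (s + S n - i)) (f i))
             (fun i => sumR (seq i (S s + n - i)) (f i)))
    by (intros; f_equal; f_equal; lia).
  rewrite (sumR_ext (seq (S s) n) (fun i => f i s + sumR (seq (S s) n) (f i))
             (fun i => f s i + sumR (seq (S s) n) (f i))) by (intros; now rewrite Hf).
  rewrite sumR_plus. specialize (IH (S s)). lra.
Qed.

Lemma sum_pairs_sym N f : (forall i j, f i j = f j i) ->
  2 * sum_pairs N f =
  sumR (seq 1 N) (fun i => sumR (seq 1 N) (f i)) + sumR (seq 1 N) (fun i => f i i).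
Proof. intros Hf. exact (sum_upper_sym 1 N f Hf). Qed.

Definition total_rate (psi : nat -> nat -> R) (N : nat) (eta : list nat) : R :=
  sum_pairs N (rate psi eta).

Lemma rate_nonneg psi eta i j : (forall i j, 0 <= psi i j) -> 0 <= rate psi eta i j.
Proof.
  intros Hpsi. pose proof (Hpsi i j); pose proof (Hpsi i i).
  pose proof (pos_INR (ncl i eta)); pose proof (pos_INR (ncl j eta)).
  unfold rate. destruct (Nat.eq_dec i j).
  - assert (0 <= INR (ncl i eta) * (INR (ncl i eta) - 1)).
    { destruct (ncl i eta); [simpl; lra|]. rewrite S_INR. pose proof (pos_INR n). nra. }
    apply Rmult_le_pos; [lra | auto].
  - apply Rmult_le_pos; [apply Rmult_le_pos|]; auto.
Qed.

Lemma rate_neq0_In psi eta i j : rate psi eta i j <> 0 ->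
  In i eta /\ In j (remove_one i eta).
Proof.
  unfold rate, ncl. intros H.
  assert (Hi : In i eta).
  { apply (count_occ_In Nat.eq_dec). destruct (count_occ Nat.eq_dec eta i); [|lia].
    exfalso; apply H; destruct (Nat.eq_dec i j); simpl; lra. }
  split; [exact Hi|]. apply (count_occ_In Nat.eq_dec).
  rewrite count_occ_remove_one by exact Hi.
  destruct (Nat.eq_dec i j) as [<-|Hij].
  - destruct (count_occ Nat.eq_dec eta i) as [|[|c]]; [..|simpl; lia];
      exfalso; apply H; simpl; lra.
  - destruct (count_occ Nat.eq_dec eta j); [|lia]. exfalso; apply H; simpl; lra.
Qed.

Lemma rate_mult_sym eta i j : rate psi_mult eta i j = rate psi_mult eta j i.
Proof.
  unfold rate, psi_mult. destruct (Nat.eq_dec i j), (Nat.eq_dec j i); subst; try congruence; ring.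
Qed.

Lemma sumR_ncl N eta h : (forall x, In x eta -> (1 <= x <= N)%nat) ->
  sumR (seq 1 N) (fun i => h i * INR (ncl i eta)) = sumR eta h.
Proof.
  induction eta as [|x eta IH]; intros Hin.
  - transitivity (sumR (seq 1 N) (fun _ => 0)); [|apply sumR_0].
    apply sumR_ext; intros; simpl; ring.
  - assert (Hx : In x (seq 1 N)) by (apply in_seq; specialize (Hin x (or_introl eq_refl)); lia).
    rewrite (sumR_ext _ _ (fun i => h i * INR (ncl i eta) + (if Nat.eq_dec x i then h i else 0))).
    + rewrite sumR_plus, IH, (sumR_select Nat.eq_dec _ x h (seq_NoDup N 1) Hx);
        [simpl; ring|]. intros y Hy; apply Hin; simpl; auto.
    + intros i _. unfold ncl. simpl. destruct (Nat.eq_dec x i); [rewrite S_INR|]; ring.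
Qed.

Lemma total_rate_mult N eta : (forall x, In x eta -> (1 <= x <= N)%nat) ->
  total_rate psi_mult N eta = sumR eta INR * sumR eta INR - sumR eta (fun x => INR x * INR x).
Proof.
  intros Hin. set (l := seq 1 N). set (a i := INR (ncl i eta)).
  set (S := sumR l (fun j => INR j * a j)).
  assert (Hrow : forall i, In i l -> sumR l (rate psi_mult eta i) =
      2 * (INR i * a i) * S - INR i * INR i * (a i * a i + a i)).
  { intros i Hi.
    rewrite (sumR_ext l _ (fun j => 2 * (INR i * a i) * (INR j * a j) -
        (if Nat.eq_dec i j then INR i * INR i * (a i * a i + a i) else 0))).
    - rewrite sumR_minus, (sumR_select Nat.eq_dec l i (fun _ => _));
        [|apply seq_NoDup|exact Hi].
      unfold S; rewrite sumR_mult_l; reflexivity.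
    - intros j _. unfold rate, psi_mult, a. destruct (Nat.eq_dec i j); subst; field. }
  assert (Hdiag : forall i, rate psi_mult eta i i = INR i * INR i * (a i * a i - a i)).
  { intros i. unfold rate, psi_mult, a. destruct (Nat.eq_dec i i); [field | congruence]. }
  (* Rows plus diagonal give 2 * total_rate = 2 S^2 - 2 sum_i i^2 n_i. *)
  pose proof (sum_pairs_sym N (rate psi_mult eta) (rate_mult_sym eta)) as H2.
  fold l in H2. rewrite (sumR_ext l _ _ Hrow), (sumR_ext l _ _ (fun i _ => Hdiag i)),
    <- sumR_plus in H2.
  rewrite (sumR_ext l _ (fun i => 2 * S * (INR i * a i) - 2 * (INR i * INR i * a i)))
    in H2 by (intros; ring).
  rewrite sumR_minus, <- !sumR_mult_l in H2. fold S in H2.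
  unfold S, a, l in H2. rewrite (sumR_ncl N eta INR Hin),
    (sumR_ncl N eta (fun i => INR i * INR i) Hin) in H2.
  unfold total_rate. lra.
Qed.

Lemma sum_sq_gap eta : (forall x, In x eta -> (1 <= x)%nat) ->
  INR (length eta) <= sumR eta INR /\
  sumR eta INR * (INR (length eta) - 1) <=
    sumR eta INR * sumR eta INR - sumR eta (fun x => INR x * INR x).
Proof.
  induction eta as [|x eta IH]; intros H; [simpl; lra|].
  destruct IH as [I1 I2]; [intros; apply H; simpl; auto|].
  assert (1 <= INR x) by (apply (le_INR 1), H; simpl; auto).
  simpl length; rewrite S_INR; simpl sumR. pose proof (pos_INR (length eta)). split; nra.
Qed.

Lemma total_rate_mult_ge N eta : In eta (parts N) ->
  INR N * (INR (length eta) - 1) <= total_rate psi_mult N eta.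
Proof.
  intros He. apply In_parts in He as [Hd Hs].
  assert (Hin : forall x, In x eta -> (1 <= x <= N)%nat) by (intros; eapply desc_le_In; eauto).
  rewrite total_rate_mult, sumR_INR, Hs by exact Hin.
  destruct (sum_sq_gap eta) as [_ Hgap]; [intros x Hx; apply Hin, Hx|].
  rewrite sumR_INR, Hs in Hgap. exact Hgap.
Qed.

Definition generator (psi : nat -> nat -> R) (N : nat) (w : list nat -> R) (eta : list nat) : R :=
  sum_pairs N (fun i j => rate psi eta i j * (w (merge eta i j) - w eta)).

Definition inflow (psi : nat -> nat -> R) (N : nat) (q : list nat -> R) (eta' : list nat) : R :=
  sumR (parts N) (fun eta => sum_pairs N (fun i j =>
    if list_eqb (merge eta i j) eta' then q eta * rate psi eta i j else 0)).

Definition merges_left (eta : list nat) : R := INR (length eta) - 1.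

Lemma forward_rhs_inflow psi N q eta :
  forward_rhs psi N q eta = inflow psi N q eta - q eta * total_rate psi N eta.
Proof. reflexivity. Qed.

Lemma sumR_inflow psi N q w :
  sumR (parts N) (fun e' => inflow psi N q e' * w e') =
  sumR (parts N) (fun e => sum_pairs N (fun i j => q e * rate psi e i j * w (merge e i j))).
Proof.
  unfold inflow.
  rewrite (sumR_ext _ _ (fun e' => sumR (parts N) (fun e => sum_pairs N (fun i j =>
      (if list_eqb (merge e i j) e' then q e * rate psi e i j else 0) * w e')))).
  2: { intros e' _. rewrite sumR_mult_r. apply sumR_ext; intros e _.
       rewrite Rmult_comm, sum_pairs_mult_l. apply sum_pairs_ext; intros; ring. }
  rewrite sumR_swap. apply sumR_ext; intros e He.
  rewrite <- sum_pairs_sumR. apply sum_pairs_ext; intros i j.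
  destruct (Req_dec (rate psi e i j) 0) as [H0|H0].
  - rewrite H0, Rmult_0_r, Rmult_0_l. transitivity (sumR (parts N) (fun _ => 0)); [|apply sumR_0].
    apply sumR_ext; intros. destruct (list_eqb _ _); ring.
  - destruct (rate_neq0_In _ _ _ _ H0) as [Hi Hj].
    rewrite <- (sumR_select_parts N (merge e i j) (fun e' => q e * rate psi e i j * w e'))
      by (apply merge_In_parts; auto).
    apply sumR_ext; intros e' _. rewrite list_eqb_sym. destruct (list_eqb _ _); ring.
Qed.

Lemma sumR_forward_rhs psi N q w :
  sumR (parts N) (fun e => forward_rhs psi N q e * w e) =
  sumR (parts N) (fun e => q e * generator psi N w e).
Proof.
  rewrite (sumR_ext _ _ (fun e => inflow psi N q e * w e - q e * w e * total_rate psi N e))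
    by (intros; rewrite forward_rhs_inflow; ring).
  rewrite sumR_minus, sumR_inflow, <- sumR_minus. apply sumR_ext; intros e _.
  unfold generator, total_rate. rewrite !sum_pairs_mult_l, <- sum_pairs_minus.
  apply sum_pairs_ext; intros; ring.
Qed.

Lemma generator_merges_left psi N eta :
  generator psi N merges_left eta = - total_rate psi N eta.
Proof.
  replace (- total_rate psi N eta) with (-1 * total_rate psi N eta) by ring.
  unfold generator, total_rate. rewrite sum_pairs_mult_l.
  apply sum_pairs_ext; intros i j.
  destruct (Req_dec (rate psi eta i j) 0) as [H0|H0]; [rewrite H0; ring|].
  destruct (rate_neq0_In _ _ _ _ H0) as [Hi Hj].
  unfold merges_left. rewrite <- (merge_length eta i j Hi Hj), S_INR. ring.
Qed.

Lemma derivable_pt_lim_sumR {A} (l : list A) (f : R -> A -> R) (d : A -> R) t :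
  (forall x, In x l -> derivable_pt_lim (fun s => f s x) t (d x)) ->
  derivable_pt_lim (fun s => sumR l (f s)) t (sumR l d).
Proof.
  induction l as [|a l IH]; simpl; intros H.
  - apply (derivable_pt_lim_const 0).
  - apply (derivable_pt_lim_plus (fun s => f s a) (fun s => sumR l (f s))); auto.
Qed.

Lemma derivable_pt_lim_exp_scal q s : derivable_pt_lim (fun s => exp (q * s)) s (q * exp (q * s)).
Proof.
  rewrite Rmult_comm.
  apply (derivable_pt_lim_comp (fun s => q * s) exp s q (exp (q * s))).
  - pose proof (derivable_pt_lim_scal id q s 1 (derivable_pt_lim_id s)) as Hlin.
    rewrite Rmult_1_r in Hlin. exact Hlin.
  - apply derivable_pt_lim_exp.
Qed.

Lemma nondecreasing_of_derivative (f f' : R -> R) t :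
  (forall s, derivable_pt_lim f s (f' s)) -> (forall s, 0 <= s -> 0 <= f' s) ->
  0 <= t -> f 0 <= f t.
Proof.
  intros Hd Hpos Ht. destruct (Req_dec t 0) as [->|Hne]; [lra|].
  destruct (MVT_cor2 f f' 0 t) as [c [Hc1 Hc2]]; [lra | intros; apply Hd |].
  pose proof (Hpos c ltac:(lra)). nra.
Qed.

Lemma Ex_ext N p t f g : (forall e, In e (parts N) -> f e = g e) -> Ex N p t f = Ex N p t g.
Proof. intros H. apply sumR_ext; intros e He. now rewrite H. Qed.

Lemma Ex_mult_l N p t c f : Ex N p t (fun e => c * f e) = c * Ex N p t f.
Proof. unfold Ex. rewrite sumR_mult_l. apply sumR_ext; intros; ring. Qed.

Lemma Ex_minus N p t f g : Ex N p t (fun e => f e - g e) = Ex N p t f - Ex N p t g.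
Proof. unfold Ex. rewrite <- sumR_minus. apply sumR_ext; intros; ring. Qed.

Lemma Ex_0 N p t : Ex N p t (fun _ => 0) = 0.
Proof. unfold Ex. rewrite (sumR_ext _ _ (fun _ => 0)) by (intros; ring). apply sumR_0. Qed.

Lemma generator_const psi N c eta : generator psi N (fun _ => c) eta = 0.
Proof.
  unfold generator. rewrite (sum_pairs_ext _ _ (fun i j => 0 * rate psi eta i j)) by (intros; ring).
  rewrite <- sum_pairs_mult_l. ring.
Qed.

Section ForwardEquation.

Variables (psi : nat -> nat -> R) (N : nat) (eta0 : list nat) (p : R -> list nat -> R).
Hypothesis psi_nonneg : forall i j, 0 <= psi i j.
Hypothesis eta0_parts : In eta0 (parts N).
Hypothesis Hp : is_CP_law psi N eta0 p.

Lemma Ex_at_0 w : Ex N p 0 w = w eta0.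
Proof.
  unfold Ex. rewrite <- (sumR_select_parts N eta0 w eta0_parts).
  apply sumR_ext; intros e He. rewrite (proj1 Hp e He). destruct (list_eqb _ _); ring.
Qed.

Lemma Ex_derive w s : derivable_pt_lim (fun s => Ex N p s w) s (Ex N p s (generator psi N w)).
Proof.
  unfold Ex. rewrite <- sumR_forward_rhs.
  apply derivable_pt_lim_sumR; intros e He.
  apply derivable_pt_lim_scal_right, (proj2 Hp), He.
Qed.

Lemma Ex_one t : 0 <= t -> Ex N p t (fun _ => 1) = 1.
Proof.
  intros Ht. set (mass s := Ex N p s (fun _ => 1)).
  assert (Hd : forall s, derivable_pt_lim mass s 0).
  { intros s. rewrite <- (Ex_0 N p s), <- (Ex_ext N p s (generator psi N (fun _ => 1)))
      by (intros; apply generator_const).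
    apply Ex_derive. }
  assert (mass 0 <= mass t).
  { apply (nondecreasing_of_derivative _ (fun _ => 0)); [exact Hd | intros; lra | exact Ht]. }
  assert (- mass 0 <= - mass t).
  { apply (nondecreasing_of_derivative (fun s => - mass s) (fun _ => - 0));
      [intros s; apply (derivable_pt_lim_opp mass), Hd | intros; lra | exact Ht]. }
  unfold mass in *. rewrite Ex_at_0 in *. lra.
Qed.

(* [is_CP_law] only provides the forward equations. Nonnegativity of the law follows from
   the integrating factor exp (total_rate * s) and induction on N minus the number of
   clusters, since a state is fed only by states with one more cluster. *)
Lemma law_nonneg_of_inflow eta : In eta (parts N) ->
  (forall s, 0 <= s -> 0 <= inflow psi N (p s) eta) -> forall t, 0 <= t -> 0 <= p t eta.
Proof.
  intros Heta Hin t Ht. set (q := total_rate psi N eta).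
  assert (Hmono : p 0 eta * exp (q * 0) <= p t eta * exp (q * t)).
  { apply (nondecreasing_of_derivative (fun s => p s eta * exp (q * s))
      (fun s => inflow psi N (p s) eta * exp (q * s))); [|intros s Hs | exact Ht].
    - intros s. replace (inflow psi N (p s) eta * exp (q * s)) with
        (forward_rhs psi N (p s) eta * exp (q * s) + p s eta * (q * exp (q * s)))
        by (rewrite forward_rhs_inflow; fold q; ring).
      apply (derivable_pt_lim_mult (fun s => p s eta) (fun s => exp (q * s)));
        [apply (proj2 Hp), Heta | apply derivable_pt_lim_exp_scal].
    - pose proof (Hin s Hs); pose proof (exp_pos (q * s)); nra. }
  rewrite (proj1 Hp eta Heta), Rmult_0_r, exp_0 in Hmono.
  pose proof (exp_pos (q * t)).
  destruct (list_eqb eta eta0); nra.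
Qed.

Lemma inflow_nonneg q eta :
  (forall e, In e (parts N) -> length e = S (length eta) -> 0 <= q e) ->
  0 <= inflow psi N q eta.
Proof.
  intros Hq. apply sumR_nonneg; intros e He. apply sum_pairs_nonneg; intros i j.
  unfold list_eqb. destruct (list_eq_dec Nat.eq_dec (merge e i j) eta) as [Hm|]; [|lra].
  destruct (Req_dec (rate psi e i j) 0) as [H0|H0]; [rewrite H0; lra|].
  destruct (rate_neq0_In _ _ _ _ H0) as [Hi Hj].
  apply Rmult_le_pos; [|apply rate_nonneg, psi_nonneg].
  apply Hq; [exact He|]. rewrite <- Hm. symmetry; apply merge_length; auto.
Qed.

Lemma law_nonneg t eta : 0 <= t -> In eta (parts N) -> 0 <= p t eta.
Proof.
  intros Ht Heta. remember (N - length eta)%nat as d eqn:Hd.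
  revert t eta Ht Heta Hd; induction d as [|d IH]; intros t eta Ht Heta Hd.
  all: apply (law_nonneg_of_inflow eta Heta); [|exact Ht]; intros s Hs.
  all: apply inflow_nonneg; intros e He Hlen; pose proof (parts_length N e He) as [Hle _].
  - lia.
  - apply IH; [exact Hs | exact He | lia].
Qed.

Lemma Ex_le t f g : 0 <= t -> (forall e, In e (parts N) -> f e <= g e) -> Ex N p t f <= Ex N p t g.
Proof.
  intros Ht Hfg. apply sumR_le; intros e He.
  apply Rmult_le_compat_l; [apply law_nonneg|]; auto.
Qed.

Lemma Ex_nonneg t f : 0 <= t -> (forall e, In e (parts N) -> 0 <= f e) -> 0 <= Ex N p t f.
Proof. intros Ht Hf. rewrite <- (Ex_0 N p t). now apply Ex_le. Qed.

Lemma Ex_merges_left_derive s :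
  derivable_pt_lim (fun s => Ex N p s merges_left) s (- Ex N p s (total_rate psi N)).
Proof.
  replace (- Ex N p s (total_rate psi N)) with (Ex N p s (generator psi N merges_left)).
  - apply Ex_derive.
  - rewrite <- (Rmult_1_l (Ex N p s (total_rate psi N))), Ropp_mult_distr_l, <- Ex_mult_l.
    apply Ex_ext; intros. rewrite generator_merges_left; ring.
Qed.

End ForwardEquation.

Lemma psi_mult_nonneg i j : 0 <= psi_mult i j.
Proof. unfold psi_mult. pose proof (pos_INR i); pose proof (pos_INR j). nra. Qed.

Lemma monomers_In_parts N : In (monomers N) (parts N).
Proof.
  apply In_parts. unfold monomers. split.
  - destruct N as [|N]; simpl; [auto|]. split; [lia|]. induction N; simpl; auto.
  - induction N; simpl; auto.
Qed.

Lemma Ex_merges_left_le N p t : is_CP_law psi_mult N (monomers N) p -> 0 <= t ->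
  Ex N p t merges_left <= (INR N - 1) * exp (- (INR N * t)).
Proof.
  intros Hp Ht. pose proof (monomers_In_parts N) as Hmon.
  set (k s := - (Ex N p s merges_left * exp (INR N * s))).
  assert (Hk : k 0 <= k t).
  { apply (nondecreasing_of_derivative k (fun s =>
      - (- Ex N p s (total_rate psi_mult N) * exp (INR N * s) +
         Ex N p s merges_left * (INR N * exp (INR N * s))))); [| |exact Ht].
    - intros s. apply derivable_pt_lim_opp.
      apply (derivable_pt_lim_mult (fun s => Ex N p s merges_left) (fun s => exp (INR N * s))).
      + exact (Ex_merges_left_derive psi_mult N _ p Hp s).
      + apply derivable_pt_lim_exp_scal.
    - intros s Hs.
      assert (INR N * Ex N p s merges_left <= Ex N p s (total_rate psi_mult N)).
      { rewrite <- Ex_mult_l. apply (Ex_le psi_mult N _ p psi_mult_nonneg Hp s); auto.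
        intros e He. apply total_rate_mult_ge, He. }
      pose proof (exp_pos (INR N * s)). nra. }
  unfold k in Hk. rewrite (Ex_at_0 psi_mult N _ p Hmon Hp), Rmult_0_r, exp_0 in Hk.
  assert (merges_left (monomers N) = INR N - 1) as Hm
    by (unfold merges_left, monomers; now rewrite repeat_length).
  rewrite Hm in Hk.
  rewrite exp_Ropp. pose proof (exp_pos (INR N * t)).
  apply (Rmult_le_reg_r (exp (INR N * t))); [auto|].
  rewrite Rmult_assoc, Rinv_l by lra. lra.
Qed.

Lemma nk_nonneg k e : 0 <= nk k e.
Proof. apply pos_INR. Qed.

Lemma nk_le_N N k e : In e (parts N) -> nk k e <= INR N.
Proof.
  intros He. apply le_INR. pose proof (count_occ_bound Nat.eq_dec k e).
  pose proof (parts_length N e He). unfold ncl; lia.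
Qed.

Lemma merges_left_nonneg N e : (1 <= N)%nat -> In e (parts N) -> 0 <= merges_left e.
Proof.
  intros HN He. destruct (parts_length N e He) as [_ Hlen].
  apply le_INR in Hlen; [|exact HN]. unfold merges_left. simpl in Hlen; lra.
Qed.

Lemma nk_N_indicator N e : (1 <= N)%nat -> In e (parts N) ->
  nk N e = if list_eqb e [N] then 1 else 0.
Proof.
  intros HN He. unfold nk, ncl, list_eqb.
  destruct (parts_single_or_many N e HN He) as [->|[_ HNe]].
  - destruct (list_eq_dec Nat.eq_dec [N] [N]) as [_|]; [|congruence].
    simpl. destruct (Nat.eq_dec N N); [simpl; ring | congruence].
  - destruct (list_eq_dec Nat.eq_dec e [N]) as [->|]; [simpl in HNe; tauto|].
    apply (count_occ_not_In Nat.eq_dec) in HNe. now rewrite HNe.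
Qed.

(* A state other than [N] has m >= 2 clusters, and m <= 2 (m - 1). *)
Lemma nk_le_merges_left N k e : (1 <= N)%nat -> In e (parts N) -> k <> N ->
  nk k e <= 2 * merges_left e.
Proof.
  intros HN He Hk. unfold nk, ncl, merges_left.
  destruct (parts_single_or_many N e HN He) as [->|[Hlen _]].
  - simpl. destruct (Nat.eq_dec N k); [congruence | simpl; lra].
  - pose proof (count_occ_bound Nat.eq_dec k e) as Hc.
    apply le_INR in Hc, Hlen. simpl in Hlen. lra.
Qed.

Lemma nk_N_ge N e : (1 <= N)%nat -> In e (parts N) -> 1 - merges_left e <= nk N e.
Proof.
  intros HN He. rewrite nk_N_indicator by auto.
  destruct (parts_single_or_many N e HN He) as [->|[Hlen _]].
  - unfold merges_left, list_eqb.
    destruct (list_eq_dec Nat.eq_dec [N] [N]); [simpl; lra | congruence].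
  - apply le_INR in Hlen. unfold merges_left. simpl in Hlen. destruct (list_eqb _ _); lra.
Qed.

Section Moments.

Variables (N : nat) (p : R -> list nat -> R) (t : R).
Hypothesis Hp : is_CP_law psi_mult N (monomers N) p.
Hypothesis HN : (1 <= N)%nat.
Hypothesis Ht : 0 <= t.

Let bound := INR N * INR N * exp (- (INR N * t)).

Lemma Ex_merges_left_bound : 0 <= Ex N p t merges_left /\ INR N * Ex N p t merges_left <= bound.
Proof.
  pose proof (Ex_merges_left_le N p t Hp Ht).
  assert (0 <= Ex N p t merges_left).
  { apply (Ex_nonneg psi_mult N _ p psi_mult_nonneg Hp t merges_left Ht).
    intros e He. apply (merges_left_nonneg N e HN He). }
  pose proof (exp_pos (- (INR N * t))). apply le_INR in HN. simpl in HN.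
  unfold bound. split; [auto | nra].
Qed.

Lemma Ex_nk_bound k : k <> N -> Rabs (Ex N p t (nk k)) <= 2 * bound.
Proof.
  intros Hk. destruct Ex_merges_left_bound as [H0 H1].
  assert (0 <= Ex N p t (nk k)).
  { apply (Ex_nonneg psi_mult N _ p psi_mult_nonneg Hp t); auto using nk_nonneg. }
  assert (Ex N p t (nk k) <= 2 * Ex N p t merges_left).
  { rewrite <- Ex_mult_l. apply (Ex_le psi_mult N _ p psi_mult_nonneg Hp t); auto.
    intros e He. apply (nk_le_merges_left N k e HN He Hk). }
  apply le_INR in HN. simpl in HN. rewrite Rabs_right by lra. nra.
Qed.

Lemma Ex_nk_mul_bound k l : k <> N -> Rabs (Ex N p t (fun e => nk k e * nk l e)) <= 2 * bound.
Proof.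
  intros Hk. destruct Ex_merges_left_bound as [H0 H1].
  assert (0 <= Ex N p t (fun e => nk k e * nk l e)).
  { apply (Ex_nonneg psi_mult N _ p psi_mult_nonneg Hp t); auto.
    intros; apply Rmult_le_pos; apply nk_nonneg. }
  assert (Ex N p t (fun e => nk k e * nk l e) <= 2 * INR N * Ex N p t merges_left).
  { rewrite <- Ex_mult_l. apply (Ex_le psi_mult N _ p psi_mult_nonneg Hp t); auto.
    intros e He. pose proof (nk_le_merges_left N k e HN He Hk).
    pose proof (nk_le_N N l e He). pose proof (nk_nonneg k e). pose proof (nk_nonneg l e). nra. }
  rewrite Rabs_right by lra. lra.
Qed.

Lemma Ex_nk_N_eq : Ex N p t (nk N) = p t [N].
Proof.
  unfold Ex. transitivity (sumR (parts N) (fun e => if list_eqb e [N] then p t e else 0)).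
  - apply sumR_ext; intros e He. rewrite nk_N_indicator by auto. destruct (list_eqb _ _); ring.
  - apply (sumR_select_parts N [N] (p t)). apply In_parts. simpl. lia.
Qed.

Lemma Ex_nk_N_bound : Rabs (Ex N p t (nk N) - 1) <= 2 * bound.
Proof.
  destruct Ex_merges_left_bound as [H0 H1]. pose proof (monomers_In_parts N) as Hm.
  assert (Ex N p t (nk N) <= 1).
  { rewrite <- (Ex_one psi_mult N _ p Hm Hp t Ht).
    apply (Ex_le psi_mult N _ p psi_mult_nonneg Hp t); auto.
    intros e He. rewrite nk_N_indicator by auto. destruct (list_eqb _ _); lra. }
  assert (1 - Ex N p t merges_left <= Ex N p t (nk N)).
  { rewrite <- (Ex_one psi_mult N _ p Hm Hp t Ht), <- Ex_minus.
    apply (Ex_le psi_mult N _ p psi_mult_nonneg Hp t); auto.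
    intros e He. apply (nk_N_ge N e HN He). }
  apply le_INR in HN. simpl in HN. rewrite Rabs_left1 by lra. nra.
Qed.

End Moments.

Lemma Un_cv_of_bound (x b : nat -> R) l C n0 :
  0 <= C -> (forall n, (n0 <= n)%nat -> Rabs (x n - l) <= C * b n) -> Un_cv b 0 -> Un_cv x l.
Proof.
  intros HC Hx Hb eps Heps.
  destruct (Hb (eps / (C + 1))) as [n1 Hn1]; [apply Rdiv_lt_0_compat; lra|].
  exists (max n0 n1). intros n Hn. unfold Rdist.
  specialize (Hn1 n ltac:(lia)). unfold Rdist in Hn1. rewrite Rminus_0_r in Hn1.
  specialize (Hx n ltac:(lia)).
  assert (C * b n <= C * Rabs (b n)) by (apply Rmult_le_compat_l; [lra | apply Rle_abs]).
  assert (Hsmall : (C + 1) * Rabs (b n) < eps).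
  { apply (Rmult_lt_compat_l (C + 1)) in Hn1; [|lra].
    now rewrite Rmult_div_assoc, Rmult_div_r in Hn1 by lra. }
  pose proof (Rabs_pos (b n)). rewrite Rmult_plus_distr_r, Rmult_1_l in Hsmall. lra.
Qed.

Lemma cube_le_exp x : 0 <= x -> x * x * x <= 27 * exp x.
Proof.
  intros Hx. set (y := x / 3).
  assert (Hy : 0 <= y <= exp y) by (pose proof (exp_ineq1_le y); unfold y in *; lra).
  assert (Hexp : exp x = exp y * exp y * exp y)
    by (rewrite <- !exp_plus; f_equal; unfold y; field).
  replace (x * x * x) with (27 * (y * y * y)) by (unfold y; field).
  apply Rmult_le_compat_l; [lra|]. rewrite Hexp.
  apply Rmult_le_compat; try nra.
Qed.

Lemma Un_cv_sq_exp_neg t : 0 < t -> Un_cv (fun n => INR n * INR n * exp (- (INR n * t))) 0.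
Proof.
  intros Ht eps Heps.
  assert (Hc : 0 < eps * (t * t * t)) by (repeat apply Rmult_lt_0_compat; lra).
  destruct (INR_archimed (eps * (t * t * t)) 27) as [M HM]; [exact Hc|].
  exists (S M). intros n Hn. unfold Rdist. rewrite Rminus_0_r, exp_Ropp.
  assert (HM' : INR M < INR n) by (apply lt_INR; lia).
  pose proof (pos_INR M). pose proof (exp_pos (INR n * t)).
  pose proof (cube_le_exp (INR n * t) ltac:(nra)).
  rewrite Rabs_right by (apply Rle_ge, Rmult_le_pos; [nra | left; apply Rinv_0_lt_compat; lra]).
  apply (Rmult_lt_reg_r (exp (INR n * t))); [lra|].
  rewrite Rmult_assoc, Rinv_l, Rmult_1_r by lra.
  assert (27 < eps * (t * t * t) * INR n) by nra.
  assert (27 * (INR n * INR n) < eps * (t * t * t) * INR n * (INR n * INR n))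
    by (apply Rmult_lt_compat_r; [nra | lra]).
  assert (eps * (INR n * t * (INR n * t) * (INR n * t)) <= eps * (27 * exp (INR n * t)))
    by (apply Rmult_le_compat_l; lra).
  lra.
Qed.

Theorem mainTheorem7 (p : nat -> R -> list nat -> R)
  (Hp : forall N : nat, is_CP_law psi_mult N (monomers N) (p N)) :
  forall t : R, 0 < t ->
    (forall k : nat,
       Un_cv (fun N => Ex N (p N) t (nk k)) 0 /\
       Un_cv (fun N => Var N (p N) t (nk k)) 0) /\
    (forall k l : nat, k <> l ->
       Un_cv (fun N => Cov N (p N) t (nk k) (nk l)) 0) /\
    Un_cv (fun N => Ex N (p N) t (nk N)) 1 /\
    Un_cv (fun N => p N t [N]) 1.
Proof.
  intros t Ht.
  set (b N := INR N * INR N * exp (- (INR N * t))).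
  assert (Hb : Un_cv b 0) by exact (Un_cv_sq_exp_neg t Ht).
  assert (HE : forall k, Un_cv (fun N => Ex N (p N) t (nk k)) 0).
  { intros k. apply (Un_cv_of_bound _ b 0 2 (S k)); [lra | | exact Hb]. intros N HN.
    rewrite Rminus_0_r. apply (Ex_nk_bound N (p N) t (Hp N)); [lia | lra | lia]. }
  assert (HEE : forall k l, Un_cv (fun N => Ex N (p N) t (fun e => nk k e * nk l e)) 0).
  { intros k l. apply (Un_cv_of_bound _ b 0 2 (S k)); [lra | | exact Hb]. intros N HN.
    rewrite Rminus_0_r. apply (Ex_nk_mul_bound N (p N) t (Hp N)); [lia | lra | lia]. }
  assert (Hcov : forall k l, Un_cv (fun N => Cov N (p N) t (nk k) (nk l)) 0).
  { intros k l. replace 0 with (0 - 0 * 0) by ring.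
    apply CV_minus; [|apply CV_mult]; auto. }
  assert (HEN : Un_cv (fun N => Ex N (p N) t (nk N)) 1).
  { apply (Un_cv_of_bound _ b 1 2 1); [lra | | exact Hb]. intros N HN.
    apply (Ex_nk_N_bound N (p N) t (Hp N)); [lia | lra]. }
  split; [|split; [|split]].
  - intros k. split; [apply HE | apply (Hcov k k)].
  - intros k l _. apply Hcov.
  - exact HEN.
  - apply (Un_cv_of_bound _ b 1 2 1); [lra | | exact Hb]. intros N HN.
    rewrite <- Ex_nk_N_eq by lia. apply (Ex_nk_N_bound N (p N) t (Hp N)); [lia | lra].
Qed.
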